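(* Let $\mathcal{C}$ be a $q$-ary cyclic code of length $n$ and minimum distance $d$, and let $\mathcal{L}$ be a $q_\ell$-ary cyclic code of length $n_\ell$, dimension $k_\ell$ and minimum distance $d_\ell$, where $\mathbb{F}_{q_\ell}=\mathbb{F}_{q^u}$ is an extension field of $\mathbb{F}_q$ and $\gcd(n,n_\ell)=1$. Suppose that $\mathcal{L}$ is a non-zero-locator code of $\mathcal{C}$ (as defined in the context) with associated integers $\mu\ge 2$ and $e$. Then $$d \;\ge\; d^{\ast}:=\left\lceil \frac{\mu}{d_\ell}\right\rceil .$$
   Context: A $q$-ary cyclic code $\mathcal{C}$ of length $n$ (with $\gcd(n,q)=1$, so $x^n-1$ has $n$ distinct roots) is an ideal of $\mathbb{F}_q[x]/(x^n-1)$; codewords $c=(c_0,\dots,c_{n-1})$ are identified with polynomials $c(x)=\sum_{i=0}^{n-1}c_ix^i$. Non-zero-locator code: let $\mathcal{C}$ be a $q$-ary cyclic code of length $n$ and $\mathcal{L}$ a cyclic code of length $n_\ell$ over $\mathbb{F}_{q_\ell}=\mathbb{F}_{q^u}$ (with $\gcd(n_\ell,q)=1$), with $\gcd(n,n_\ell)=1$. Let $\alpha$ be an element of multiplicative order $n$ and $\beta$ an element of multiplicative order $n_\ell$, both lying in a common finite extension field of $\mathbb{F}_q$ (e.g. $\alpha$ in $\mathbb{F}_{q^s}$, $\beta$ in $\mathbb{F}_{q_\ell^{s_\ell}}$, both contained in $\mathbb{F}_{q^r}$ with $r=\mathrm{lcm}(s,u s_\ell)$). Then $\mathcal{L}$ is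 called a non-zero-locator code of $\mathcal{C}$ if there exist an integer $\mu\ge 2$ and an integer $e$ such that for all $a(x)\in\mathcal{L}$ and all $c(x)\in\mathcal{C}$, $$\sum_{j=0}^{\infty} c(\alpha^{j+e})\,a(\beta^j)\,x^j \equiv 0 \pmod{x^{\mu-1}}$$ as formal power series, i.e. $c(\alpha^{j+e})a(\beta^j)=0$ for $j=0,\dots,\mu-2$. *)

From HB Require Import structures.
From mathcomp Require Import all_boot all_order all_algebra.
Set Implicit Arguments. Unset Strict Implicit. Unset Printing Implicit Defensive.
Import Order.TTheory GRing.Theory Num.Theory.
Local Open Scope ring_scope.

(* Words of length n over R are row vectors 'rV[R]_n, identified with the
   polynomial c(x) = \sum_{i<n} c_i x^i. *)
Definition word_poly (R : nzRingType) (n : nat) (c : 'rV[R]_n) : {poly R} :=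
  \sum_(i < n) c 0 i *: 'X^i.

Definition poly_word (R : nzRingType) (n : nat) (p : {poly R}) : 'rV[R]_n :=
  \row_(i < n) p`_i.

(* C is a cyclic code of length n: an ideal of R[x]/(x^n - 1), i.e. it contains 0,
   is closed under addition, and under multiplication by any polynomial
   modulo x^n - 1. *)
Definition is_cyclic_code (R : finFieldType) (n : nat) (C : {set 'rV[R]_n}) : Prop :=
  [/\ (0 : 'rV[R]_n) \in C,
      (forall c1 c2, c1 \in C -> c2 \in C -> c1 + c2 \in C) &
      (forall c (p : {poly R}), c \in C ->
          poly_word n ((p * word_poly c) %% ('X^n - 1)) \in C)].

Definition wt (R : finFieldType) (n : nat) (c : 'rV[R]_n) : nat :=
  #|[set i : 'I_n | c 0 i != 0]|.

(* d is the minimum distance of the (linear) code C: the minimum Hamming weight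
   of a nonzero codeword (for linear codes this equals the minimum distance). *)
Definition min_dist (R : finFieldType) (n : nat) (C : {set 'rV[R]_n}) (d : nat) : Prop :=
  (exists2 c, c \in C & (c != 0) && (wt c == d)) /\
  (forall c, c \in C -> c != 0 -> (d <= wt c)%N).

Definition word_eval (F K : fieldType) (f : {rmorphism F -> K}) (n : nat)
    (c : 'rV[F]_n) (x : K) : K :=
  (map_poly f (word_poly c)).[x].

Definition nonzero_locator (F Fl : finFieldType) (K : fieldType)
    (iota : {rmorphism F -> K}) (kappa : {rmorphism Fl -> K})
    (n nl : nat) (C : {set 'rV[F]_n}) (L : {set 'rV[Fl]_nl})
    (alpha beta : K) (mu : nat) (e : int) : Prop :=
  (2 <= mu)%N /\
  forall a c, a \in L -> c \in C -> forall j : nat, (j <= mu - 2)%N ->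
    word_eval iota c (alpha ^ (j%:Z + e)) * word_eval kappa a (beta ^+ j) = 0.

From mathcomp Require Import all_boot all_order all_algebra.
From mathcomp Require Import ring zify.
Set Implicit Arguments. Unset Strict Implicit. Unset Printing Implicit Defensive.
Import Order.TTheory GRing.Theory Num.Theory.
Local Open Scope ring_scope.

(* Take nonzero codewords c of C and a of L of weights d and dl.  Expanding the
   locator identities c(alpha^(j+e)) a(beta^j) = 0 for j < mu - 1 shows that the
   first mu - 1 power sums of the nodes alpha^i beta^k, weighted by coefficients
   that are nonzero exactly on supp c x supp a, vanish.  As gcd(n, nl) = 1 the
   nodes are pairwise distinct, so by a Vandermonde argument the d * dl nonzero
   weights would all vanish if d * dl < mu.  Hence mu <= d * dl. *)

Lemma power_sums_support_eq0 (K : fieldType) (I : finType) (b z : I -> K) :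
  {in support b &, injective z} ->
  (forall j, (j < #|support b|)%N -> \sum_p b p * z p ^+ j = 0) ->
  forall p, b p = 0.
Proof.
move=> z_inj sum0 p0; apply/eqP/negPn/negP => bp0.
(* Pair b with the polynomial vanishing at the other support nodes:
   only the p0 term survives. *)
pose P := \prod_(q <- enum [predD1 support b & p0]) ('X - (z q)%:P).
have sizeP : size P = #|support b|.
  by rewrite size_prod_XsubC -cardE [RHS](cardD1 p0) inE bp0.
have sum_P : \sum_p b p * P.[z p] = 0.
  under eq_bigr do rewrite horner_coef mulr_sumr.
  rewrite exchange_big /= big1 // => j _.
  under eq_bigr do rewrite mulrCA.
  by rewrite -mulr_sumr sum0 ?mulr0 // -sizeP.
have P_root q : q != p0 -> b q != 0 -> P.[z q] = 0.
  move=> qp0 bq; rewrite horner_prod; apply/eqP; rewrite prodf_seq_eq0.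
  apply/hasP; exists q; first by rewrite mem_enum !inE qp0.
  by rewrite /= hornerXsubC subrr.
have P_p0_neq0 : P.[z p0] != 0.
  rewrite horner_prod prodf_seq_neq0; apply/allP => q.
  rewrite mem_enum !inE => /andP[qp0 bq].
  by rewrite hornerXsubC subr_eq0; apply: contra qp0 => /eqP/z_inj->.
suff : b p0 * P.[z p0] = 0 by move/eqP; rewrite mulf_eq0 (negPf bp0) (negPf P_p0_neq0).
rewrite -sum_P (bigD1 p0) //= big1 ?addr0 // => q qp0.
by have [->|bq] := eqVneq (b q) 0; rewrite ?mul0r // P_root ?mulr0.
Qed.

Lemma word_evalE (F K : fieldType) (f : {rmorphism F -> K}) (n : nat)
    (c : 'rV[F]_n) (x : K) :
  word_eval f c x = \sum_(i < n) f (c 0 i) * x ^+ i.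
Proof.
rewrite /word_eval /word_poly raddf_sum horner_sum; apply: eq_bigr => i _.
by rewrite /= map_polyZ map_polyXn hornerZ hornerXn.
Qed.

Lemma prim_root_mulX_inj (K : fieldType) (n nl : nat) (alpha beta : K) :
  coprime n nl -> n.-primitive_root alpha -> nl.-primitive_root beta ->
  forall (i i' : 'I_n) (k k' : 'I_nl),
  alpha ^+ i * beta ^+ k = alpha ^+ i' * beta ^+ k' -> i = i' /\ k = k'.
Proof.
move=> co_n_nl alpha_prim beta_prim i i' k k' eq_ik.
(* Raising to the power nl kills beta and keeps the n-th primitive root alpha ^+ nl. *)
have alpha_nl_prim : n.-primitive_root (alpha ^+ nl).
  by rewrite prim_root_exp_coprime // coprime_sym.
have eq_i : i = i'.
  apply: val_inj; move: (congr1 (fun x => x ^+ nl) eq_ik) => /eqP.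
  rewrite !exprMn -!exprM !(mulnC _ nl) !exprM (prim_expr_order beta_prim).
  rewrite !expr1n !mulr1 (eq_prim_root_expr alpha_nl_prim).
  by rewrite !modn_small ?ltn_ord // => /eqP.
subst i'; split=> //; apply: val_inj.
have alpha_i_neq0 : alpha ^+ i != 0.
  by rewrite expf_neq0 // (prim_root_eq0 alpha_prim) -lt0n (prim_order_gt0 alpha_prim).
move/mulfI: eq_ik => /(_ alpha_i_neq0)/eqP.
by rewrite (eq_prim_root_expr beta_prim) !modn_small ?ltn_ord // => /eqP.
Qed.

Lemma wt_gt0 (F : finFieldType) (n : nat) (c : 'rV[F]_n) : (0 < wt c)%N = (c != 0).
Proof.
rewrite lt0n cards_eq0; congr negb; apply/eqP/eqP => [supp0|->].
  by apply/rowP => i; move/setP/(_ i): supp0; rewrite !inE mxE => /negbFE/eqP.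
by apply/setP => i; rewrite !inE mxE eqxx.
Qed.

Section LocatorProduct.

Variables (F1 F2 : finFieldType) (K : fieldType).
Variables (f1 : {rmorphism F1 -> K}) (f2 : {rmorphism F2 -> K}).
Variables (n m : nat) (c : 'rV[F1]_n) (a : 'rV[F2]_m) (x : K) (e : int).

Definition locator_coef (p : 'I_n * 'I_m) : K :=
  f1 (c 0 p.1) * (x ^ e) ^+ p.1 * f2 (a 0 p.2).

Lemma word_eval_mul_power_sum (y : K) (j : nat) : x != 0 ->
  word_eval f1 c (x ^ (j%:Z + e)) * word_eval f2 a (y ^+ j) =
  \sum_p locator_coef p * (x ^+ p.1 * y ^+ p.2) ^+ j.
Proof.
move=> x_neq0; rewrite !word_evalE big_distrl /=.
under eq_bigr do rewrite big_distrr /=.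
rewrite pair_bigA; apply: eq_bigr => -[i k] _ /=.
rewrite /locator_coef /= expfzDr // -exprnP.
by rewrite !exprMn -!exprM !(mulnC j) !exprM; ring.
Qed.

Lemma card_support_locator_coef : x != 0 ->
  #|support locator_coef| = (wt c * wt a)%N.
Proof.
move=> x_neq0; rewrite -cardX; apply: eq_card => -[i k].
rewrite !inE /locator_coef !mulf_eq0 negb_or expf_eq0 expfz_eq0 (negPf x_neq0).
by rewrite !andbF orbF !fmorph_eq0.
Qed.

End LocatorProduct.

Lemma ceil_ratio_le (mu dl d : nat) : (0 < dl)%N -> (mu <= d * dl)%N ->
  Num.ceil ((mu%:R : rat) / dl%:R) <= d%:Z.
Proof.
move=> dl_gt0 mu_le; rewrite ceil_le_int ler_pdivrMr ?ltr0n //.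
by rewrite -[d%:Z%:~R]/(d%:R : rat) -natrM ler_nat.
Qed.

Theorem theorem2
  (Fq Fql K : finFieldType)
  (emb : {rmorphism Fq -> Fql})   (* F_{q_l} = F_{q^u} is an extension of F_q *)
  (kappa : {rmorphism Fql -> K})  (* common extension field F_{q^r} *)
  (n nl d dl : nat)
  (C : {set 'rV[Fq]_n}) (L : {set 'rV[Fql]_nl})
  (alpha beta : K) (mu : nat) (e : int) :
  (0 < n)%N -> (0 < nl)%N ->
  coprime n #|Fq| -> coprime nl #|Fq| -> coprime n nl ->
  is_cyclic_code C -> min_dist C d ->
  is_cyclic_code L ->
  min_dist L dl ->
  n.-primitive_root alpha -> nl.-primitive_root beta ->
  nonzero_locator (kappa \o emb) kappa C L alpha beta mu e ->
  Num.ceil ((mu%:R : rat) / (dl%:R : rat)) <= d%:Z.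
Proof.
move=> n_gt0 _ _ _ co_n_nl _ [[c cC /andP[c_neq0 /eqP wt_c]] _] _.
move=> [[a aL /andP[a_neq0 /eqP wt_a]] _] alpha_prim beta_prim [_ locator].
have alpha_neq0 : alpha != 0 by rewrite (prim_root_eq0 alpha_prim) -lt0n.
pose b := locator_coef (kappa \o emb) kappa c a alpha e.
have card_b : #|support b| = (d * dl)%N by rewrite card_support_locator_coef // wt_c wt_a.
apply: ceil_ratio_le; first by rewrite -wt_a wt_gt0.
rewrite leqNgt; apply/negP => ddl_lt_mu.
have b_eq0 : forall p, b p = 0.
  apply: (@power_sums_support_eq0 _ _ b (fun p => alpha ^+ p.1 * beta ^+ p.2)).
    move=> [i k] [i' k'] _ _ /=.
    by move/(prim_root_mulX_inj co_n_nl alpha_prim beta_prim) => [-> ->].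
  move=> j; rewrite card_b => j_lt; rewrite -[RHS](locator a c aL cC j); last by lia.
  by rewrite word_eval_mul_power_sum.
suff : (0 < d * dl)%N by rewrite -card_b => /card_gt0P [p]; rewrite inE b_eq0 eqxx.
by rewrite muln_gt0 -wt_c -wt_a !wt_gt0 c_neq0 a_neq0.
Qed.
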